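(* Let $F$ satisfy the hypotheses of the scalar-offset setting (i.e. $F+r$ satisfies (A1) and (A3) for some $r\in\mathbb R$), and consider the linear family with basis $\psi=(F;1)$, i.e. $F_\theta=\theta_1F+\theta_2$, $\theta=(\theta_1,\theta_2)\in\Theta\subset\mathbb R^2$, assuming (A2) and (A4). Define $\theta^\circ_1=\arg\min_{\vartheta\in\mathbb R}[\Lambda_0(\vartheta F)-\vartheta\pi^1(F)]$ (assumed to exist), $\theta^\circ_2=0$, $\theta^\circ=(\theta^\circ_1,\theta^\circ_2)$, $r^\circ=\varrho_a-\Lambda_0(F_{\theta^\circ})$ and $\theta^*=\theta^\circ+r^\circ(0,1)$, and suppose $\theta^*\in\Theta$. Then $\theta^*$ minimizes $\theta\mapsto\bar J^*_\infty(\kappa;\theta)$ over $\Theta$ for every $\kappa>1$.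
   Context: Setting: $(\mathsf Y,\mathcal B)$ measurable space; $X^0,X^1$ mutually independent stationary $\mathsf Y$-valued processes with marginals $\pi^0,\pi^1$, independent of a change time $\tau_a$; $\nu(G)=\int G\,d\nu$. $\Lambda_0(G)=\lim_n\frac1n\log E[\exp(\sum_{k=0}^{n-1}G(X^0_k))]$. (A1) for a function $G$: $\pi^0(G)<0<\pi^1(G)$. (A2): for some $\varrho_a\in(0,\infty)$, $\lim_n\frac1n\log P\{\tau_a\ge n\}=-\varrho_a$. (A3) for a function $G$: with $\Upsilon_0(\vartheta)=\Lambda_0(\vartheta G)$, $G$ belongs to the class $\mathcal G$ (functions for which the cumulant generating functions for $X^0,X^1$ exist finitely and the twisted marginals, twisted processes and relative entropy rates exist); there exist $\vartheta_+>\vartheta_0>0$ with $\Upsilon_0(\vartheta_0)=0$, $\Upsilon_0(\vartheta_+)=\varrho_a$; $\Upsilon_0$ is finite and $C^1$ near $[0,\vartheta_+]$; $\vartheta G\in\mathcal G$ for $\vartheta$ near $[0,\vartheta_+]$. (A4): $\Theta$ open; each $F_\theta$ satisfies (A3); components of $\psi$ are in $\mathcal G$; $(\vartheta,\theta)\mapsto\Lambda_0(\vartheta F_\theta)$ is $C^1$ near $\{(\vartheta,\theta):\vartheta\in[0,\vartheta_+^\theta],\theta\in\Theta\}$; $v^\top\psi\equiv1$ with $v=(0,1)$. Notation: $\vartheta_+^\theta$ solves $\Lambda_0(\vartheta_+^\theta F_\theta)=\varrho_a$ as in (A3); $m_1^\theta=\pi^1(F_\theta)$ (assumed positive); $\bar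 J^*_\infty(\kappa;\theta)=\frac{\log\kappa}{m_1^\theta\vartheta_+^\theta}$. *)

From HB Require Import structures.
From mathcomp Require Import all_boot all_order all_algebra.
From mathcomp Require Import all_classical all_reals all_analysis.
Set Implicit Arguments. Unset Strict Implicit. Unset Printing Implicit Defensive.
Import Order.TTheory GRing.Theory Num.Theory.
Import numFieldNormedType.Exports.
Local Open Scope classical_set_scope.
Local Open Scope ring_scope.

Section Setting.
Context {R : realType} {dO dY : measure_display}
  {Omega : measurableType dO} {Y : measurableType dY} (P : probability Omega R).

Definition is_process (X : nat -> Omega -> Y) : Prop :=
  forall k, measurable_fun setT (X k).

Definition stationary (X : nat -> Omega -> Y) : Prop :=
  forall (m n : nat) (A : nat -> set Y), (forall k, measurable (A k)) ->
    P (\bigcap_(k in `I_n) (X (k + m)%N @^-1` A k)) =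
    P (\bigcap_(k in `I_n) (X k @^-1` A k)).

Definition mutually_independent (X0 X1 : nat -> Omega -> Y) (tau : Omega -> nat)
  : Prop :=
  forall (n : nat) (A B : nat -> set Y) (C : set nat),
    (forall k, measurable (A k)) -> (forall k, measurable (B k)) ->
    let E0 := \bigcap_(k in `I_n) (X0 k @^-1` A k) in
    let E1 := \bigcap_(k in `I_n) (X1 k @^-1` B k) in
    let E2 := tau @^-1` C in
    P (E0 `&` E1 `&` E2) = (P E0 * P E1 * P E2)%E.

(* nu(G) = int G d(pi), pi the (time-0) marginal of X *)
Definition marg (X : nat -> Omega -> Y) (G : Y -> R) : R :=
  fine (\int[P]_w (G (X 0%N w))%:E).

(* the n-th term (n+1 summands) of the cumulant generating sequence *)
Definition cgf_seq (X : nat -> Omega -> Y) (G : Y -> R) (n : nat) : R :=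
  (n.+1%:R)^-1 *
    ln (fine (\int[P]_w (expR (\sum_(k < n.+1) G (X k w)))%:E)).

Definition Lambda (X : nat -> Omega -> Y) (G : Y -> R) : R := limn (cgf_seq X G).

Definition cgf_exists (X : nat -> Omega -> Y) (G : Y -> R) : Prop :=
  (forall n, (\int[P]_w (expR (\sum_(k < n.+1) G (X k w)))%:E < +oo)%E) /\
  cvgn (cgf_seq X G).

Definition in_classG (X0 X1 : nat -> Omega -> Y) (G : Y -> R) : Prop :=
  measurable_fun setT G /\
  P.-integrable setT (fun w => (G (X0 0%N w))%:E) /\
  P.-integrable setT (fun w => (G (X1 0%N w))%:E) /\
  cgf_exists X0 G /\ cgf_exists X1 G.

Definition scal (t : R) (G : Y -> R) : Y -> R := fun y => t * G y.

Definition A1 (X0 X1 : nat -> Omega -> Y) (G : Y -> R) : Prop :=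
  marg X0 G < 0 < marg X1 G.

Definition A2 (tau : Omega -> nat) (rho : R) : Prop :=
  0 < rho /\
  (fun n : nat => (n.+1%:R)^-1 * ln (fine (P [set w | (n.+1 <= tau w)%N])))
    @ \oo --> - rho.

Definition A3 (X0 X1 : nat -> Omega -> Y) (rho : R) (G : Y -> R) : Prop :=
  in_classG X0 X1 G /\
  exists tp t0 : R, 0 < t0 < tp /\
    Lambda X0 (scal t0 G) = 0 /\ Lambda X0 (scal tp G) = rho /\
    exists e : R, 0 < e /\
      (forall t, - e < t < tp + e ->
         in_classG X0 X1 (scal t G) /\
         derivable (fun s => Lambda X0 (scal s G)) t 1) /\
      {in `](- e), (tp + e)[, continuous
           (derive1 (fun s => Lambda X0 (scal s G)))}.

Definition Ftheta (F : Y -> R) (theta : R * R) : Y -> R :=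
  fun y => theta.1 * F y + theta.2.

Definition vtplus (X0 : nat -> Omega -> Y) (rho : R) (F : Y -> R)
  (theta : R * R) : R :=
  xget 0 [set tp | exists t0, 0 < t0 < tp /\
     Lambda X0 (scal t0 (Ftheta F theta)) = 0 /\
     Lambda X0 (scal tp (Ftheta F theta)) = rho].

Definition m1 (X1 : nat -> Omega -> Y) (F : Y -> R) (theta : R * R) : R :=
  marg X1 (Ftheta F theta).

Definition Jbar (X0 X1 : nat -> Omega -> Y) (rho : R) (F : Y -> R)
  (kappa : R) (theta : R * R) : R :=
  ln kappa / (m1 X1 F theta * vtplus X0 rho F theta).

End Setting.

Definition C1_near {R : realType} (f : R * (R * R) -> R) (K : set (R * (R * R)))
  : Prop :=
  exists U : set (R * (R * R)), open U /\ K `<=` U /\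
    (forall z, U z -> differentiable f z) /\
    (forall v, v \in [:: (1, (0, 0)); (0, (1, 0)); (0, (0, 1))] ->
       {in U, continuous (fun z => derive f z v)}).

Definition A4 {R : realType} {dO dY : measure_display}
  {Omega : measurableType dO} {Y : measurableType dY} (P : probability Omega R)
  (X0 X1 : nat -> Omega -> Y) (rho : R) (F : Y -> R) (Theta : set (R * R))
  : Prop :=
  open Theta /\
  (forall theta, Theta theta -> A3 P X0 X1 rho (Ftheta F theta)) /\
  in_classG P X0 X1 F /\ in_classG P X0 X1 (fun _ => 1) /\
  C1_near (fun z => Lambda P X0 (scal z.1 (Ftheta F z.2)))
    [set z | Theta z.2 /\ 0 <= z.1 <= vtplus P X0 rho F z.2].

From HB Require Import structures.
From mathcomp Require Import all_boot all_order all_algebra.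
From mathcomp Require Import all_classical all_reals all_analysis.
From mathcomp Require Import ring lra measurable_realfun.
Import Order.TTheory GRing.Theory Num.Theory.
Import numFieldNormedType.Exports.
Set Implicit Arguments. Unset Strict Implicit. Unset Printing Implicit Defensive.
Local Open Scope classical_set_scope.
Local Open Scope ring_scope.

(* Shifting F_theta by a constant c shifts Lambda_0 by c, so along the ray
   t F_theta = (t theta1) F + t theta2 the equation Lambda_0(t F_theta) = rho at
   t = vartheta_+^theta reads Lambda_0(s F) = rho - t theta2 with s = t theta1.
   Minimality of theta1o at s then bounds the denominator of Jbar:
   m_1^theta vartheta_+^theta = s pi1(F) + t theta2
     <= rho - Lambda_0(theta1o F) + theta1o pi1(F),
   and theta* attains the bound, with vartheta_+ = 1.  Identifying vartheta_+
   rests on the convexity of Lambda_0 along rays (Hoelder's inequality for each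
   finite-horizon cumulant); together with Lambda_0(0) = 0 it makes the positive
   solution of Lambda_0(t G) = rho unique. *)

Lemma expR_convex_offset {R : realType} (l x y a b : R) : 0 <= l <= 1 ->
  expR (l * x + (1 - l) * y) <=
    l * expR (l * a + (1 - l) * b - a) * expR x +
    (1 - l) * expR (l * a + (1 - l) * b - b) * expR y.
Proof.
move=> /andP[l_ge0 l_le1]; rewrite -!mulrA -!expRD.
set c := l * a + (1 - l) * b.
have -> : l * x + (1 - l) * y = l * (c - a + x) + (1 - l) * (c - b + y).
  by rewrite /c; ring.
exact: (convex_expR (Itv01 l_ge0 l_le1)).
Qed.

Lemma integral_expR_gt0 {R : realType} {d : measure_display}
  {T : measurableType d} (P : probability T R) (f : T -> R) :
  measurable_fun setT f -> (0 < \int[P]_w (expR (f w))%:E)%E.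
Proof.
move=> mf; have mef : measurable_fun setT (EFin \o (fun w => expR (f w))).
  by apply/measurable_EFinP; exact: measurableT_comp mf.
rewrite lt0e integral_ge0 ?andbT; last by move=> w _; rewrite lee_fin expR_ge0.
apply/negP => /eqP int0.
have : ae_eq P setT (fun w => (expR (f w))%:E) (cst 0%E).
  apply/(ae_eq_integral_abs _ measurableT mef).
  by under eq_integral do rewrite gee0_abs ?lee_fin ?expR_ge0//.
case=> N [mN PN0 sN].
have : (P setT <= P N)%E.
  apply: le_measure; rewrite ?inE// => w _; apply: sN => /(_ I) /eqP.
  by rewrite eqe gt_eqF ?expR_gt0.
by rewrite probability_setT PN0 lee_fin ler10.
Qed.

Section CumulantSequence.
Context {R : realType} {dO dY : measure_display}
  {Omega : measurableType dO} {Y : measurableType dY} (P : probability Omega R).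
Variable X : nat -> Omega -> Y.
Hypothesis X_process : is_process X.

Definition mgf (G : Y -> R) (n : nat) : \bar R :=
  \int[P]_w (expR (\sum_(k < n.+1) G (X k w)))%:E.

Lemma measurable_partial_sum (G : Y -> R) n : measurable_fun setT G ->
  measurable_fun setT (fun w => \sum_(k < n.+1) G (X k w)).
Proof.
by move=> mG; apply: measurable_sum => k; exact: measurableT_comp mG (X_process k).
Qed.

Lemma measurable_expR_partial_sum (G : Y -> R) n : measurable_fun setT G ->
  measurable_fun setT (fun w => (expR (\sum_(k < n.+1) G (X k w)))%:E).
Proof.
move=> mG; apply/(measurable_EFinP _ (fun w => expR (\sum_(k < n.+1) G (X k w)))).
exact: measurableT_comp (measurable_partial_sum n mG).
Qed.

Lemma mgf_ge0 (G : Y -> R) n : (0 <= mgf G n)%E.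
Proof. by apply: integral_ge0 => w _; rewrite lee_fin expR_ge0. Qed.

Lemma mgf_gt0 (G : Y -> R) n : measurable_fun setT G -> (0 < mgf G n)%E.
Proof. by move=> mG; apply/integral_expR_gt0/measurable_partial_sum. Qed.

Lemma fine_mgf_gt0 (G : Y -> R) n : measurable_fun setT G ->
  (mgf G n < +oo)%E -> 0 < fine (mgf G n).
Proof. by move=> mG mfin; apply: fine_gt0; rewrite mgf_gt0. Qed.

Lemma mgf_fin_num (G : Y -> R) n : (mgf G n < +oo)%E -> mgf G n \is a fin_num.
Proof. by move=> mfin; rewrite ge0_fin_numE ?mgf_ge0. Qed.

Lemma cgf_seqE (G : Y -> R) n :
  cgf_seq P X G n = n.+1%:R^-1 * ln (fine (mgf G n)).
Proof. by []. Qed.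

Lemma mgf_cgf_seq (G : Y -> R) n : measurable_fun setT G ->
  (mgf G n < +oo)%E -> mgf G n = (expR (n.+1%:R * cgf_seq P X G n))%:E.
Proof.
move=> mG mfin; rewrite cgf_seqE mulrA mulfV ?pnatr_eq0// mul1r.
by rewrite lnK ?posrE ?fine_mgf_gt0// fineK ?mgf_fin_num.
Qed.

Lemma cgf_seq_le (G : Y -> R) n (a : R) : measurable_fun setT G ->
  (mgf G n <= (expR (n.+1%:R * a))%:E)%E -> cgf_seq P X G n <= a.
Proof.
move=> mG le_mgf; have mfin := le_lt_trans le_mgf (ltry _).
rewrite cgf_seqE ler_pdivrMl ?ltr0Sn// -ler_expR lnK ?posrE ?fine_mgf_gt0//.
by rewrite -lee_fin fineK ?mgf_fin_num.
Qed.

Lemma cgf_seq_neq0_mgf_fin (G : Y -> R) n :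
  cgf_seq P X G n != 0 -> (mgf G n < +oo)%E.
Proof.
apply: contraNT; rewrite -leNgt leye_eq => /eqP mgf_oo.
by rewrite cgf_seqE mgf_oo /= ln0 ?mulr0.
Qed.

Lemma mgf_shift (G : Y -> R) (c : R) n : measurable_fun setT G ->
  mgf (fun y => G y + c) n = ((expR (n.+1%:R * c))%:E * mgf G n)%E.
Proof.
move=> mG; rewrite /mgf -ge0_integralZl_EFin ?expR_ge0//; last first.
  exact: measurable_expR_partial_sum.
apply: eq_integral => w _; rewrite -EFinM big_split /= sumr_const card_ord.
by rewrite mulr_natl addrC expRD.
Qed.

Lemma cgf_seq_shift (G : Y -> R) (c : R) n : measurable_fun setT G ->
  (mgf G n < +oo)%E ->
  cgf_seq P X (fun y => G y + c) n = cgf_seq P X G n + c.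
Proof.
move=> mG mfin; rewrite !cgf_seqE mgf_shift// fineM ?mgf_fin_num//.
rewrite lnM ?posrE ?expR_gt0 ?fine_mgf_gt0// expRK mulrDr mulrA.
by rewrite mulVf ?pnatr_eq0// mul1r addrC.
Qed.

Lemma cgf_exists_shift (G : Y -> R) (c : R) : measurable_fun setT G ->
  cgf_exists P X G ->
  cgf_exists P X (fun y => G y + c) /\
  Lambda P X (fun y => G y + c) = Lambda P X G + c.
Proof.
move=> mG [mfin cvgG].
have cvg_shift : cgf_seq P X (fun y => G y + c) @ \oo --> Lambda P X G + c.
  have -> : cgf_seq P X (fun y => G y + c) = (fun n => cgf_seq P X G n + c).
    by apply/funext => n; rewrite cgf_seq_shift ?mfin.
  exact: cvgD cvgG (cvg_cst c).
split; last exact: cvg_lim.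
split; last by apply/cvg_ex; exists (Lambda P X G + c).
move=> n; change (mgf (fun y => G y + c)%R n < +oo)%E.
rewrite mgf_shift// -(fineK (mgf_fin_num (mfin n))).
by rewrite -EFinM ltry.
Qed.

Lemma mgf_le_combination (G1 G2 G3 : Y -> R) (c2 c3 : R) n :
  measurable_fun setT G1 -> measurable_fun setT G2 ->
  measurable_fun setT G3 -> 0 <= c2 -> 0 <= c3 ->
  (forall w, expR (\sum_(k < n.+1) G1 (X k w)) <=
     c2 * expR (\sum_(k < n.+1) G2 (X k w)) +
     c3 * expR (\sum_(k < n.+1) G3 (X k w))) ->
  (mgf G1 n <= c2%:E * mgf G2 n + c3%:E * mgf G3 n)%E.
Proof.
move=> mG1 mG2 mG3 c2_ge0 c3_ge0 le_pw.
have mZ (c : R) (G : Y -> R) : measurable_fun setT G ->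
    measurable_fun setT (fun w => (c%:E * (expR (\sum_(k < n.+1) G (X k w)))%:E)%E).
  by move=> mG; apply: emeasurable_funM => //; exact: measurable_expR_partial_sum.
have ge0Z (c : R) (G : Y -> R) : 0 <= c -> forall w, setT w ->
    (0 <= c%:E * (expR (\sum_(k < n.+1) G (X k w)))%:E)%E.
  by move=> c_ge0 w _; rewrite mule_ge0 ?lee_fin ?expR_ge0.
have mE2 := measurable_expR_partial_sum n mG2.
have mE3 := measurable_expR_partial_sum n mG3.
rewrite /mgf -ge0_integralZl_EFin// -ge0_integralZl_EFin//.
rewrite -(ge0_integralD P measurableT (ge0Z _ G2 c2_ge0) (mZ _ _ mG2)
  (ge0Z _ G3 c3_ge0) (mZ _ _ mG3)).
apply: (ge0_le_integral P measurableT) => [w _|||w _].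
- by rewrite lee_fin expR_ge0.
- exact: measurable_expR_partial_sum.
- exact: emeasurable_funD (mZ _ _ mG2) (mZ _ _ mG3).
- by rewrite -!EFinM -EFinD lee_fin.
Qed.

Lemma mgf_log_convex (G : Y -> R) (l p r a b : R) n : measurable_fun setT G ->
  0 <= l <= 1 ->
  mgf (scal p G) n = (expR a)%:E -> mgf (scal r G) n = (expR b)%:E ->
  (mgf (scal (l * p + (1 - l) * r) G) n <= (expR (l * a + (1 - l) * b))%:E)%E.
Proof.
move=> mG l01 mgf_p mgf_r; have /andP[l_ge0 l_le1] := l01.
have mscal t : measurable_fun setT (scal t G) by exact: measurable_funM.
have sum_scal t w : \sum_(k < n.+1) scal t G (X k w) = t * \sum_(k < n.+1) G (X k w).
  by rewrite mulr_sumr.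
have c2_ge0 : 0 <= l * expR (l * a + (1 - l) * b - a) by rewrite mulr_ge0 ?expR_ge0.
have c3_ge0 : 0 <= (1 - l) * expR (l * a + (1 - l) * b - b).
  by rewrite mulr_ge0 ?expR_ge0 ?subr_ge0.
(* Hoelder's inequality: the weights c2, c3 normalise exp(pS) and exp(rS) by
   their means, so the combination integrates to exp(l a + (1 - l) b) *)
apply: le_trans
  (mgf_le_combination (G2 := scal p G) (G3 := scal r G) _ _ _ c2_ge0 c3_ge0 _) _ => //.
  move=> w; rewrite !sum_scal mulrDl -(mulrA l) -(mulrA (1 - l)).
  exact: expR_convex_offset.
rewrite mgf_p mgf_r -!EFinM -EFinD lee_fin -!mulrA -!expRD !subrK.
by rewrite -mulrDl addrC subrK mul1r.
Qed.

Lemma cgf_seq_convex (G : Y -> R) (l p r : R) n : measurable_fun setT G ->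
  0 <= l <= 1 -> (mgf (scal p G) n < +oo)%E -> (mgf (scal r G) n < +oo)%E ->
  cgf_seq P X (scal (l * p + (1 - l) * r) G) n <=
    l * cgf_seq P X (scal p G) n + (1 - l) * cgf_seq P X (scal r G) n.
Proof.
move=> mG l01 fin_p fin_r.
have mscal t : measurable_fun setT (scal t G) by exact: measurable_funM.
apply: cgf_seq_le => //.
apply: le_trans (mgf_log_convex mG l01 (mgf_cgf_seq (mscal p) fin_p)
  (mgf_cgf_seq (mscal r) fin_r)) _.
move: (cgf_seq P X (scal p G) n) (cgf_seq P X (scal r G) n) => A B.
by rewrite lee_fin ler_expR mulrDr !(mulrCA n.+1%:R).
Qed.

Lemma mgf_scal0 (G : Y -> R) n : mgf (scal 0 G) n = 1%E.
Proof.
rewrite /mgf (eq_integral (fun=> 1%E)); last first.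
  by move=> w _; rewrite big1 ?expR0// => k _; rewrite /scal mul0r.
by rewrite integral_cst// mul1e; exact: probability_setT.
Qed.

Lemma cgf_seq_scal0 (G : Y -> R) : cgf_seq P X (scal 0 G) = fun=> 0.
Proof. by apply/funext => n; rewrite cgf_seqE mgf_scal0 ln1 mulr0. Qed.

Lemma Lambda_scal0 (G : Y -> R) : Lambda P X (scal 0 G) = 0.
Proof. by rewrite /Lambda cgf_seq_scal0 lim_cst. Qed.

Definition cgf_regular (G : Y -> R) : Prop :=
  cgf_seq P X G @ \oo --> Lambda P X G /\
  \forall n \near \oo, (mgf G n < +oo)%E.

Lemma cgf_regular_scal0 (G : Y -> R) : cgf_regular (scal 0 G).
Proof.
split; first by rewrite Lambda_scal0 cgf_seq_scal0; exact: cvg_cst.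
by apply: nearW => n; rewrite mgf_scal0 ltry.
Qed.

(* Lambda is a limit that defaults to 0, so a nonzero value certifies convergence *)
Lemma Lambda_neq0_regular (G : Y -> R) : Lambda P X G != 0 -> cgf_regular G.
Proof.
move=> L_neq0; have cvgL : cgf_seq P X G @ \oo --> Lambda P X G.
  have [//|ncvg] := pselect (cvgn (cgf_seq P X G)).
  by move: L_neq0; rewrite /Lambda dvgP// eqxx.
split=> //; near=> n; apply: cgf_seq_neq0_mgf_fin.
by near: n; exact: cvgr_neq0 cvgL L_neq0.
Unshelve. all: end_near.
Qed.

Lemma Lambda_convex (G : Y -> R) (l p r : R) : measurable_fun setT G ->
  0 <= l <= 1 -> cgf_regular (scal p G) -> cgf_regular (scal r G) ->
  cgf_regular (scal (l * p + (1 - l) * r) G) ->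
  Lambda P X (scal (l * p + (1 - l) * r) G) <=
    l * Lambda P X (scal p G) + (1 - l) * Lambda P X (scal r G).
Proof.
move=> mG l01 [cvg_p fin_p] [cvg_r fin_r] [cvg_q _].
apply: ler_cvg_to cvg_q
  (cvgD (cvgM (cvg_cst l) cvg_p) (cvgM (cvg_cst (1 - l)) cvg_r)) _.
apply: filterS2 fin_p fin_r => n fin_pn fin_rn /=.
exact: (cgf_seq_convex mG l01 fin_pn fin_rn).
Qed.

Lemma Lambda_level_unique (G : Y -> R) (rho b d : R) : measurable_fun setT G ->
  0 < rho -> 0 < b -> 0 < d ->
  Lambda P X (scal b G) = rho -> Lambda P X (scal d G) = rho -> b = d.
Proof.
move=> mG rho_gt0; wlog lt_bd : b d / b < d.
  move=> wlog_lt b_gt0 d_gt0 Lb Ld.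
  case: (ltgtP b d) => [lt_bd|lt_db|//]; first exact: wlog_lt.
  by apply/esym; exact: wlog_lt.
move=> b_gt0 d_gt0 Lb Ld; exfalso.
have reg t : Lambda P X (scal t G) = rho -> cgf_regular (scal t G).
  by move=> Lt; apply: Lambda_neq0_regular; rewrite Lt gt_eqF.
(* b = l * 0 + (1 - l) * d, and convexity with Lambda(0) = 0 forces Lambda(b) < rho *)
set l := 1 - b / d.
have l01 : 0 <= l <= 1.
  by rewrite /l subr_ge0 lerBlDr lerDl ler_pdivrMr ?mul1r ?divr_ge0 ?ltW.
have b_conv : b = l * 0 + (1 - l) * d by rewrite /l mulr0 add0r opprB addrC subrK mulfVK ?gt_eqF.
have := Lambda_convex mG l01 (cgf_regular_scal0 G) (reg d Ld).
rewrite -b_conv Lb Lambda_scal0 Ld mulr0 add0r => /(_ (reg b Lb)).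
rewrite /l opprB addrC subrK; apply/negP; rewrite -ltNge.
by rewrite gtr_pMl ?ltr_pdivrMr ?mul1r.
Qed.

End CumulantSequence.

Lemma marg_affine {R : realType} {dO dY : measure_display}
  {Omega : measurableType dO} {Y : measurableType dY} (P : probability Omega R)
  (X : nat -> Omega -> Y) (F : Y -> R) (a c : R) :
  P.-integrable setT (fun w => (F (X 0%N w))%:E) ->
  marg P X (fun y => a * F y + c) = a * marg P X F + c.
Proof.
move=> intF; rewrite /marg.
change (Rintegral P setT (fun w => a * F (X 0%N w) + c) =
  a * Rintegral P setT (fun w => F (X 0%N w)) + c).
have intZ : P.-integrable setT (EFin \o (fun w => a * F (X 0%N w))).
  rewrite (_ : EFin \o _ = (fun w => (a%:E * (F (X 0%N w))%:E)%E)).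
    exact: integrableZl.
  by apply/funext => w /=; rewrite EFinM.
rewrite RintegralD//; last exact: finite_measure_integrable_cst.
have P1 : fine (P setT) = 1 by rewrite probability_setT.
by rewrite RintegralZl// Rintegral_cst// P1 mulr1.
Qed.

Section LinearFamily.
Context {R : realType} {dO dY : measure_display}
  {Omega : measurableType dO} {Y : measurableType dY} (P : probability Omega R).
Variables (X0 X1 : nat -> Omega -> Y) (rho : R) (F : Y -> R).
Hypotheses (X0_process : is_process X0) (rho_gt0 : 0 < rho).

Lemma vtplus_eq (theta : R * R) (t : R) : A3 P X0 X1 rho (Ftheta F theta) ->
  0 < t -> Lambda P X0 (scal t (Ftheta F theta)) = rho ->
  vtplus P X0 rho F theta = t.
Proof.
move=> [[mG _] [tp [t0 [/andP[t0_gt0 t0_lt_tp] [L0 [Ltp _]]]]]] t_gt0 Lt.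
have level_unique := Lambda_level_unique X0_process mG rho_gt0.
have tpE : tp = t by apply: level_unique Ltp Lt => //; exact: lt_trans t0_lt_tp.
rewrite -tpE in t_gt0 Lt *; apply: xget_unique; first by exists t0; rewrite t0_gt0.
move=> s [s0 [/andP[s0_gt0 s0_lt_s] [_ Ls]]].
by apply: level_unique Ls Lt => //; exact: lt_trans s0_lt_s.
Qed.

Lemma vtplus_spec (theta : R * R) : A3 P X0 X1 rho (Ftheta F theta) ->
  let t := vtplus P X0 rho F theta in
  [/\ 0 < t, Lambda P X0 (scal t (Ftheta F theta)) = rho &
      cgf_exists P X0 (scal t (Ftheta F theta))].
Proof.
move=> A3_theta; have := A3_theta.
move=> [_ [tp [t0 [/andP[t0_gt0 t0_lt_tp] [_ [Ltp [e [e_gt0 [reg _]]]]]]]]].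
have tp_gt0 := lt_trans t0_gt0 t0_lt_tp.
rewrite /= (vtplus_eq A3_theta tp_gt0 Ltp); split=> //.
have /reg[[_ [_ [_ [cgf_tp _]]]] _] : - e < tp < tp + e.
  by rewrite ltrDl e_gt0 andbT (lt_trans _ tp_gt0)// oppr_lt0.
exact: cgf_tp.
Qed.

Lemma m1_vtplus_le (theta1o : R) (theta : R * R) :
  measurable_fun setT F -> P.-integrable setT (fun w => (F (X1 0%N w))%:E) ->
  (forall t : R, cgf_exists P X0 (scal t F) ->
     Lambda P X0 (scal theta1o F) - theta1o * marg P X1 F
       <= Lambda P X0 (scal t F) - t * marg P X1 F) ->
  A3 P X0 X1 rho (Ftheta F theta) ->
  m1 P X1 F theta * vtplus P X0 rho F theta <=
    rho - Lambda P X0 (scal theta1o F) + theta1o * marg P X1 F.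
Proof.
move=> mF intF min_o A3_theta; have [[mG _] _] := A3_theta.
have [] := vtplus_spec A3_theta; set t := vtplus _ _ _ _ _ => t_gt0 Lt cgf_t.
have mtG : measurable_fun setT (scal t (Ftheta F theta)) by exact: measurable_funM.
have [cgf_s Ls] := cgf_exists_shift X0_process (- (t * theta.2)) mtG cgf_t.
have offset : (fun y => scal t (Ftheta F theta) y - t * theta.2) = scal (t * theta.1) F.
  by apply/funext => y; rewrite /scal /Ftheta mulrDr addrK mulrA.
(* minimality of theta1o at t theta1, once the offset t theta2 is removed *)
rewrite offset in cgf_s Ls; have := min_o _ cgf_s.
rewrite Ls Lt /m1 /Ftheta marg_affine//.
move: (Lambda P X0 (scal theta1o F)) (marg P X1 F) => L pi ineq.
by clear -ineq; lra.
Qed.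

End LinearFamily.

Theorem propositiont (R : realType) (dO dY : measure_display)
  (Omega : measurableType dO) (Y : measurableType dY) (P : probability Omega R)
  (X0 X1 : nat -> Omega -> Y) (tau : Omega -> nat) (rho : R)
  (F : Y -> R) (Theta : set (R * R)) (theta1o : R) :
  is_process X0 -> is_process X1 ->
  stationary P X0 -> stationary P X1 ->
  (forall n, measurable [set w | (n <= tau w)%N]) ->
  mutually_independent P X0 X1 tau ->
  (* scalar-offset setting *)
  (exists r : R, A1 P X0 X1 (fun y => F y + r) /\
                 A3 P X0 X1 rho (fun y => F y + r)) ->
  A2 P tau rho ->
  A4 P X0 X1 rho F Theta ->
  (* m_1^theta > 0 on Theta *)
  (forall theta, Theta theta -> 0 < m1 P X1 F theta) ->
  (* theta1o = argmin_vartheta [Lambda0(vartheta F) - vartheta pi^1(F)] *)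
  cgf_exists P X0 (scal theta1o F) ->
  (forall t : R, cgf_exists P X0 (scal t F) ->
     Lambda P X0 (scal theta1o F) - theta1o * marg P X1 F
       <= Lambda P X0 (scal t F) - t * marg P X1 F) ->
  let thetao := (theta1o, 0) in
  let ro := rho - Lambda P X0 (Ftheta F thetao) in
  let thetastar := (thetao.1 + ro * 0, thetao.2 + ro * 1) in
  Theta thetastar ->
  forall kappa : R, 1 < kappa ->
  forall theta, Theta theta ->
    Jbar P X0 X1 rho F kappa thetastar <= Jbar P X0 X1 rho F kappa theta.
Proof.
move=> X0_process _ _ _ _ _ _ [rho_gt0 _] [_ [A3_Theta [[mF [_ [intF1 _]]] _]]].
move=> m1_gt0 cgf_o min_o thetao ro thetastar Theta_star kappa kappa_gt1.
move=> theta Theta_theta.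
set K := rho - Lambda P X0 (scal theta1o F) + theta1o * marg P X1 F.
have roE : ro = rho - Lambda P X0 (scal theta1o F).
  by rewrite /ro /Ftheta /thetao; congr (_ - Lambda _ _ _); apply/funext => y; rewrite addr0.
have star_shift : scal 1 (Ftheta F thetastar) = (fun y => scal theta1o F y + ro).
  by apply/funext => y; rewrite /scal /Ftheta /= mul1r mulr0 mulr1 addr0 add0r.
have m_o : measurable_fun setT (scal theta1o F) by exact: measurable_funM.
have [_ L_shift] := cgf_exists_shift X0_process ro m_o cgf_o.
have vt_star : vtplus P X0 rho F thetastar = 1.
  apply: (vtplus_eq X0_process rho_gt0 (A3_Theta _ Theta_star) ltr01).
  by rewrite star_shift L_shift roE addrC subrK.
have m1_star : m1 P X1 F thetastar = K.
  rewrite /m1 /Ftheta (marg_affine _ _ intF1) /thetastar roE /K.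
  by move: (Lambda _ _ _) (marg _ _ _) => L pi /=; rewrite mulr0 addr0 add0r mulr1 addrC.
have [vt_gt0 _ _] := vtplus_spec X0_process rho_gt0 (A3_Theta _ Theta_theta).
have denom_gt0 := mulr_gt0 (m1_gt0 _ Theta_theta) vt_gt0.
have denom_le := m1_vtplus_le X0_process rho_gt0 mF intF1 min_o (A3_Theta _ Theta_theta).
have K_gt0 : 0 < K := lt_le_trans denom_gt0 denom_le.
rewrite /Jbar vt_star mulr1 m1_star.
apply: ler_wpM2l; first exact/ln_ge0/ltW.
by rewrite lef_pV2 ?posrE; [exact: denom_le | exact: K_gt0 | exact: denom_gt0].
Qed.
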